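(* For every $n\ge 1$, the linear complexity of $(r_0,r_1,\ldots,r_{n-1})$ over $\mathrm{GF}(2)$ equals $\lfloor (n+1)/2\rfloor$; equivalently, the sequence $(r_0,r_1,\ldots)$ has a perfect linear complexity profile.
   Context: $(r_0,r_1,\ldots)$ is the binary sequence with $r_i=1$ if $i=2^j-1$ for some $j\ge 0$ and $r_i=0$ otherwise. A monic $c\in\mathrm{GF}(2)[x]$ of degree $l$ is a characteristic polynomial of $(s_0,\ldots,s_{n-1})$ if either $l\ge n$ or $c_ls_{k+l}+\cdots+c_0s_k=0$ for all $0\le k\le n-l-1$; the linear complexity of $(s_0,\ldots,s_{n-1})$ is the minimal degree of a characteristic polynomial. *)

From mathcomp Require Import all_boot all_algebra.
Set Implicit Arguments. Unset Strict Implicit. Unset Printing Implicit Defensive.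
Import GRing.Theory.
Local Open Scope ring_scope.

Definition rseq (i : nat) : 'F_2 :=
  if [exists j : 'I_(i.+2), (2 ^ j)%N == i.+1] then 1 else 0.

Definition char_poly_of (s : nat -> 'F_2) (n : nat) (c : {poly 'F_2}) : Prop :=
  c \is monic /\
  ((n <= (size c).-1)%N \/
   forall k : nat, (k + (size c).-1 < n)%N ->
     \sum_(i < (size c).-1.+1) c`_i * s (k + i)%N = 0).

Definition is_linear_complexity (s : nat -> 'F_2) (n l : nat) : Prop :=
  (exists c : {poly 'F_2}, char_poly_of s n c /\ (size c).-1 = l) /\
  (forall c : {poly 'F_2}, char_poly_of s n c -> (l <= (size c).-1)%N).

From mathcomp Require Import all_boot all_algebra.
From mathcomp Require Import zify.
Set Implicit Arguments. Unset Strict Implicit. Unset Printing Implicit Defensive.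
Import GRing.Theory.
Local Open Scope ring_scope.

(* Call a sequence s "Hankel-regular of order N" when the N x N
   Hankel matrix (s (k + i))_{k, i < N} has trivial kernel.  Two general facts
   relate this to linear complexity over GF(2):
   - regularity of order m with n <= 2m yields, by solving a square linear
     system, a characteristic polynomial of degree m for (s_0, ..., s_{n-1});
   - a characteristic polynomial of degree d with 2d < n is a nonzero kernel
     vector of the Hankel matrix of order d + 1, so regularity forbids it.
   Hence if s is Hankel-regular of every order, its linear complexity on n
   terms is floor((n+1)/2).  For r = rseq and its shift r' i = r (i + 1) one
   has r (2x+1) = r x, r (2x+2) = 0, r' (2x) = r x and r' (2x+1) = 0.  Splitting
   the Hankel sums by the parity of the index (decimation), the even- and
   odd-indexed coefficients of a kernel vector of order N form kernel vectors
   of orders about N/2 for r or r'; a joint strong induction on N then shows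
   that r and r' are Hankel-regular of every order. *)

Section HankelRegularity.

Variable R : nzRingType.

Definition hankel_row (s c : nat -> R) (N k : nat) : R :=
  \sum_(i < N) c i * s (k + i)%N.

Definition hankel_regular (s : nat -> R) (N : nat) : Prop :=
  forall c : nat -> R, (forall k, (k < N)%N -> hankel_row s c N k = 0) ->
  forall i, (i < N)%N -> c i = 0.

Lemma hankel_regular0 (s : nat -> R) : hankel_regular s 0.
Proof. by []. Qed.

Lemma sum_parity_split (f : nat -> R) (N : nat) :
  \sum_(i < N) f i = \sum_(i < uphalf N) f i.*2 + \sum_(i < N./2) f i.*2.+1.
Proof.
elim: N f => [|N IH] f; first by rewrite !big_ord0 addr0.
rewrite big_ord_recl (IH (fun i => f i.+1)) /= big_ord_recl.
by rewrite addrA addrAC.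
Qed.

Lemma parity_vanish (c : nat -> R) (N : nat) :
  (forall i, (i < uphalf N)%N -> c i.*2 = 0) ->
  (forall i, (i < N./2)%N -> c i.*2.+1 = 0) ->
  forall i, (i < N)%N -> c i = 0.
Proof.
move=> c_even c_odd i lt_iN; rewrite uphalf_half in c_even.
have eqN := odd_double_half N; have eqi := odd_double_half i.
case: (odd i) eqi => eqi; rewrite -eqi in lt_iN.
  by rewrite -eqi; apply: c_odd; lia.
by rewrite -eqi; apply: c_even; lia.
Qed.

Lemma hankel_row_even (s c : nat -> R) (N k : nat) :
  (forall i, (i < N./2)%N -> c i.*2.+1 * s (k + i.*2.+1)%N = 0) ->
  hankel_row s c N k = \sum_(i < uphalf N) c i.*2 * s (k + i.*2)%N.
Proof.
move=> odd0; rewrite /hankel_row (sum_parity_split (fun i => c i * s (k + i)%N)).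
by rewrite [X in _ + X]big1 ?addr0 // => i _; apply: odd0.
Qed.

Lemma hankel_row_odd (s c : nat -> R) (N k : nat) :
  (forall i, (i < uphalf N)%N -> c i.*2 * s (k + i.*2)%N = 0) ->
  hankel_row s c N k = \sum_(i < N./2) c i.*2.+1 * s (k + i.*2.+1)%N.
Proof.
move=> even0; rewrite /hankel_row (sum_parity_split (fun i => c i * s (k + i)%N)).
by rewrite big1 ?add0r // => i _; apply: even0.
Qed.

End HankelRegularity.

(* Over a finite field, regularity of order m makes the Hankel system
   solvable for every right-hand side, since an injective endomorphism of a
   finite set is onto. *)
Lemma hankel_solvable (F : finFieldType) (s : nat -> F) (m : nat) :
  hankel_regular s m -> forall b : nat -> F,
  exists v : nat -> F, forall k, (k < m)%N -> hankel_row s v m k = b k.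
Proof.
move=> reg b.
pose ext (u : {ffun 'I_m -> F}) (i : nat) := if insub i is Some j then u j else 0.
have ext_val u (i : 'I_m) : ext u i = u i by rewrite /ext valK.
pose H u := [ffun k : 'I_m => hankel_row s (ext u) m k].
have H_inj : injective H.
  move=> u w /ffunP eqH; apply/ffunP => j.
  suff /(_ j (ltn_ord j)) : forall i, (i < m)%N -> ext u i - ext w i = 0.
    by rewrite !ext_val => /eqP; rewrite subr_eq0 => /eqP.
  apply: reg => k lt_km; have := eqH (Ordinal lt_km); rewrite !ffunE => /eqP.
  rewrite -subr_eq0 /hankel_row -sumrB => /eqP eq0; apply: etrans eq0.
  by apply: eq_bigr => i _; rewrite mulrBl.
have [G _ HG] := injF_bij H_inj.
pose rhs := [ffun k : 'I_m => b k].
exists (ext (G rhs)) => k lt_km.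
by have := congr1 (fun f : {ffun 'I_m -> F} => f (Ordinal lt_km)) (HG rhs); rewrite !ffunE.
Qed.

Lemma char_poly_exists (s : nat -> 'F_2) (n m : nat) :
  hankel_regular s m -> (n <= m.*2)%N ->
  exists c : {poly 'F_2}, char_poly_of s n c /\ (size c).-1 = m.
Proof.
move=> reg le_n2m.
have [v Hv] := hankel_solvable reg (fun k => - s (k + m)%N).
pose c : {poly 'F_2} := \poly_(i < m.+1) (if (i < m)%N then v i else 1).
have size_c : size c = m.+1 by rewrite size_poly_eq //= ltnn oner_neq0.
exists c; rewrite size_c; split => //; split.
  by rewrite monicE lead_coef_poly //= ltnn.
right; rewrite size_c /= => k lt_kn; have lt_km : (k < m)%N by lia.
rewrite big_ord_recr /= [c`_m]coef_poly ltnSn ltnn mul1r.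
rewrite (eq_bigr (fun i : 'I_m => v i * s (k + i)%N)) => [|i _]; last first.
  by rewrite coef_poly ltnS (ltnW (ltn_ord i)) ltn_ord.
by have := Hv k lt_km; rewrite /hankel_row => ->; rewrite addNr.
Qed.

(* A characteristic polynomial of degree d of a prefix of length n > 2d is a
   nonzero kernel vector of the Hankel system of order d + 1. *)
Lemma char_poly_not_regular (s : nat -> 'F_2) (n : nat) (c : {poly 'F_2}) :
  char_poly_of s n c -> ((size c).-1.*2 < n)%N ->
  ~ hankel_regular s (size c).-1.+1.
Proof.
move=> [monic_c [le_nd | rel_c]] lt_2dn reg; first by lia.
have := reg (fun i => c`_i) (fun k lt_kd => rel_c k ltac:(lia)) _ (ltnSn _).
by move/monicP: monic_c; rewrite lead_coefE => -> /eqP; rewrite oner_eq0.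
Qed.

Definition rshift (i : nat) : 'F_2 := rseq i.+1.

Lemma rseq0 : rseq 0 = 1.
Proof. by rewrite /rseq; case: existsP => // -[]; exists ord0. Qed.

Lemma rseq_even (x : nat) : rseq (x.+1).*2 = 0.
Proof.
rewrite /rseq; case: existsP => // -[j /eqP pow_j].
have := congr1 odd pow_j; rewrite oddX /= odd_double /=.
by case: (val j) pow_j => [|j'] //=; rewrite expn0 => /eqP; rewrite eqSS; lia.
Qed.

(* 2x + 1 = 2^j - 1 iff j >= 1 and x = 2^(j-1) - 1. *)
Lemma rseq_odd (x : nat) : rseq x.*2.+1 = rseq x.
Proof.
rewrite /rseq; congr (if _ then _ else _).
apply/existsP/existsP => -[j /eqP pow_j].
  case: j pow_j => [[|j] lt_j] /=; rewrite ?expn0 ?expnS => pow_j; first by lia.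
  have lt_jx : (j < x.+2)%N by have := ltn_expl j (isT : 1 < 2)%N; lia.
  by exists (Ordinal lt_jx); apply/eqP; rewrite /=; lia.
have lt_jx : (j.+1 < x.*2.+3)%N by have := ltn_ord j; lia.
by exists (Ordinal lt_jx); rewrite /= expnS pow_j; apply/eqP; lia.
Qed.

Lemma rshift_even (x : nat) : rshift x.*2 = rseq x.
Proof. exact: rseq_odd. Qed.

Lemma rshift_odd (x : nat) : rshift x.*2.+1 = 0.
Proof. exact: rseq_even. Qed.

(* Decimation for r, even order: the even- and odd-indexed coefficients of a
   kernel vector of order 2M for r are kernel vectors of order M for r. *)
Lemma regular_rseq_double (M : nat) :
  hankel_regular rseq M -> hankel_regular rseq M.*2.
Proof.
move=> reg c rel_c.
have c_even : forall i, (i < M)%N -> c i.*2 = 0.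
  apply: (reg (fun i => c i.*2)) => k lt_kM.
  rewrite -[RHS](rel_c k.*2.+1 ltac:(lia)) [RHS]hankel_row_even => [|i _]; last first.
    by rewrite (_ : (k.*2.+1 + i.*2.+1)%N = (k + i).+1.*2) ?rseq_even ?mulr0 //; lia.
  rewrite /hankel_row uphalf_double; apply: eq_bigr => i _.
  by rewrite (_ : (k.*2.+1 + i.*2)%N = (k + i).*2.+1) ?rseq_odd //; lia.
have c_odd : forall i, (i < M)%N -> c i.*2.+1 = 0.
  apply: (reg (fun i => c i.*2.+1)) => k lt_kM.
  rewrite -[RHS](rel_c k.*2 ltac:(lia)) [RHS]hankel_row_odd => [|i]; last first.
    by rewrite uphalf_double => lt_iM; rewrite c_even // mul0r.
  rewrite /hankel_row doubleK; apply: eq_bigr => i _.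
  by rewrite (_ : (k.*2 + i.*2.+1)%N = (k + i).*2.+1) ?rseq_odd //; lia.
by apply: parity_vanish => i; rewrite ?uphalf_double ?doubleK; [apply: c_even | apply: c_odd].
Qed.

(* Decimation for r, odd order 2M + 1: the row k = 0 forces c_0 = 0, and the
   remaining even- and odd-indexed coefficients are kernel vectors of order M
   for r'. *)
Lemma regular_rseq_double_succ (M : nat) :
  hankel_regular rshift M -> hankel_regular rseq M.*2.+1.
Proof.
move=> reg c rel_c.
have [up_N half_N] : uphalf M.*2.+1 = M.+1 /\ (M.*2.+1)./2 = M.
  by rewrite /= uphalf_double doubleK.
have c_odd : forall i, (i < M)%N -> c i.*2.+1 = 0.
  apply: (reg (fun i => c i.*2.+1)) => k lt_kM.
  rewrite -[RHS](rel_c (k.+1).*2 ltac:(lia)) [RHS]hankel_row_odd => [|i _]; last first.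
    by rewrite (_ : ((k.+1).*2 + i.*2)%N = (k + i).+1.*2) ?rseq_even ?mulr0 //; lia.
  rewrite /hankel_row half_N; apply: eq_bigr => i _.
  by rewrite (_ : ((k.+1).*2 + i.*2.+1)%N = (k + i).+1.*2.+1) ?rseq_odd //; lia.
have c0 : c 0%N = 0.
  have := rel_c 0%N isT; rewrite hankel_row_even => [|i]; last first.
    by rewrite half_N => lt_iM; rewrite c_odd // mul0r.
  rewrite up_N big_ord_recl big1 => [|i _]; last by rewrite add0n rseq_even mulr0.
  by rewrite rseq0 mulr1 addr0.
have c_even : forall i, (i < M)%N -> c (i.+1).*2 = 0.
  apply: (reg (fun i => c (i.+1).*2)) => k lt_kM.
  rewrite -[RHS](rel_c k.*2.+1 ltac:(lia)) [RHS]hankel_row_even => [|i _]; last first.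
    by rewrite (_ : (k.*2.+1 + i.*2.+1)%N = (k + i).+1.*2) ?rseq_even ?mulr0 //; lia.
  rewrite /hankel_row up_N big_ord_recl c0 mul0r add0r; apply: eq_bigr => i _.
  by rewrite (_ : (k.*2.+1 + (i.+1).*2)%N = (k + i).+1.*2.+1) ?rseq_odd //; lia.
apply: parity_vanish; last by rewrite half_N.
by rewrite up_N => -[|i] lt_iM; [exact: c0 | apply: c_even].
Qed.

(* Decimation for r': a kernel vector of order N for r' splits into kernel
   vectors of order ceil(N/2) for r and floor(N/2) for r'. *)
Lemma regular_rshift (N : nat) :
  hankel_regular rseq (uphalf N) -> hankel_regular rshift N./2 ->
  hankel_regular rshift N.
Proof.
move=> reg_r reg_r' c rel_c; have eqN := odd_double_half N.
have c_even : forall i, (i < uphalf N)%N -> c i.*2 = 0.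
  apply: (reg_r (fun i => c i.*2)) => k lt_k.
  have lt_2k : (k.*2 < N)%N by move: lt_k; rewrite uphalf_half; lia.
  rewrite -[RHS](rel_c k.*2 lt_2k) [RHS]hankel_row_even => [|i _]; last first.
    by rewrite (_ : (k.*2 + i.*2.+1)%N = (k + i).*2.+1) ?rshift_odd ?mulr0 //; lia.
  by rewrite /hankel_row; apply: eq_bigr => i _; rewrite -doubleD rshift_even.
have c_odd : forall i, (i < N./2)%N -> c i.*2.+1 = 0.
  apply: (reg_r' (fun i => c i.*2.+1)) => k lt_k.
  rewrite -[RHS](rel_c k.*2.+1 ltac:(lia)) [RHS]hankel_row_odd => [|i _]; last first.
    by rewrite (_ : (k.*2.+1 + i.*2)%N = (k + i).*2.+1) ?rshift_odd ?mulr0 //; lia.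
  rewrite /hankel_row; apply: eq_bigr => i _.
  by rewrite (_ : (k.*2.+1 + i.*2.+1)%N = (k + i).+1.*2) ?rshift_even //; lia.
exact: parity_vanish.
Qed.

(* Joint strong induction: r and r' are Hankel-regular of every order.  The
   order-N statements for r use only smaller orders; the one for r' may also
   use the order-N statement for r when N = 1. *)
Lemma rseq_regular (N : nat) : hankel_regular rseq N /\ hankel_regular rshift N.
Proof.
elim/ltn_ind: N => N IH.
have [-> | pos_N] := posnP N; first by split; apply: hankel_regular0.
have eqN := odd_double_half N.
have lt_half : (N./2 < N)%N by lia.
have reg_r : hankel_regular rseq N.
  rewrite -eqN; case: (odd N) {eqN}; [rewrite add1n | rewrite add0n].
    exact/regular_rseq_double_succ/(IH _ lt_half).2.
  exact/regular_rseq_double/(IH _ lt_half).1.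
split=> //; apply: regular_rshift; last exact: (IH _ lt_half).2.
have [-> // | lt_up] : uphalf N = N \/ (uphalf N < N)%N by rewrite uphalf_half; lia.
exact: (IH _ lt_up).1.
Qed.

Theorem corollary4 (n : nat) : (1 <= n)%N ->
  is_linear_complexity rseq n (n.+1 %/ 2)%N.
Proof.
move=> _; split.
  by apply: char_poly_exists; [exact: (rseq_regular _).1 | lia].
move=> c char_c; rewrite leqNgt; apply/negP => lt_deg.
by apply: (char_poly_not_regular char_c); [lia | exact: (rseq_regular _).1].
Qed.
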